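(* Let $X$ be a real reflexive Banach space and let $\varepsilon\in[0,2)$. Then $X$ is $\varepsilon$-smooth if and only if $\mathcal{S}(X^* )\le\varepsilon$.
   Context: For a normed space $Z$ and $z\in Z\setminus\{\theta\}$, $J(z)=\{\phi\in S_{Z^*}:\phi(z)=\|z\|\}$, where $S_{Z^*}$ is the unit sphere of the dual. A point $z$ is $\varepsilon$-smooth if $\operatorname{diam}J(z)\le\varepsilon$ ($\operatorname{diam}A=\sup_{a,b\in A}\|a-b\|$); the space $Z$ is $\varepsilon$-smooth if every $z\in S_Z$ is $\varepsilon$-smooth. For a normed space $W$, $\mathcal{S}(W)=\sup\{\operatorname{diam}(H\cap S_W): H \text{ a supporting hyperplane of } B_W\}$, where a supporting hyperplane of $B_W$ is a set $\{w\in W:\phi(w)=1\}$ with $\phi\in S_{W^*}$; equivalently $\mathcal{S}(W)=\sup\{\operatorname{diam}\{w\in S_W:\phi(w)=1\}:\phi\in S_{W^*}\}$. Here it is applied with $W=X^*$. *)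

From HB Require Import structures.
From mathcomp Require Import all_boot all_order all_algebra.
From mathcomp Require Import all_classical all_reals all_analysis.
Set Implicit Arguments. Unset Strict Implicit. Unset Printing Implicit Defensive.
Import Order.TTheory GRing.Theory Num.Theory.
Import numFieldNormedType.Exports.
Local Open Scope classical_set_scope.
Local Open Scope ring_scope.

(* Elements of the dual X* are represented as functions X -> R that are
   linear and bounded (= continuous linear functionals). *)
Section Duality.
Variables (R : realType) (X : normedModType R).

Definition is_dual (f : X -> R) : Prop :=
  (forall (a : R) (x y : X), f (a *: x + y) = a * f x + f y) /\
  (exists C : R, forall x : X, `|f x| <= C * `|x|).

Definition dnorm (f : X -> R) : R :=
  sup [set `|f x| | x in [set x : X | `|x| <= 1]].

Definition dual_sphere (f : X -> R) : Prop := is_dual f /\ dnorm f = 1.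

Definition ddiam (A : set (X -> R)) : \bar R :=
  ereal_sup [set (dnorm (fun x => f x - g x))%:E
            | f in A & g in A].

Definition Jset (z : X) : set (X -> R) :=
  [set f | dual_sphere f /\ f z = `|z|].

Definition eps_smooth_pt (eps : R) (z : X) : Prop := (ddiam (Jset z) <= eps%:E)%E.

Definition eps_smooth (eps : R) : Prop :=
  forall z : X, `|z| = 1 -> eps_smooth_pt eps z.

(* Elements of the bidual X** : maps on X* (functions X -> R), linear and
   bounded w.r.t. the dual norm on the dual elements. *)
Definition is_bidual (Phi : (X -> R) -> R) : Prop :=
  (forall (a : R) (f g : X -> R), is_dual f -> is_dual g ->
      Phi (fun x => a * f x + g x) = a * Phi f + Phi g) /\
  (exists C : R, forall f, is_dual f -> `|Phi f| <= C * dnorm f).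

Definition bdnorm (Phi : (X -> R) -> R) : R :=
  sup [set `|Phi f| | f in [set f | is_dual f /\ dnorm f <= 1]].

Definition face (Phi : (X -> R) -> R) : set (X -> R) :=
  [set f | dual_sphere f /\ Phi f = 1].

Definition bidual_sphere (Phi : (X -> R) -> R) : Prop :=
  is_bidual Phi /\ bdnorm Phi = 1.

Definition S_dual : \bar R :=
  ereal_sup [set ddiam (face Phi) | Phi in bidual_sphere].

Definition reflexive_space : Prop :=
  forall Phi, is_bidual Phi -> exists x : X, forall f, is_dual f -> Phi f = f x.

End Duality.

From HB Require Import structures.
From mathcomp Require Import all_boot all_order all_algebra.
From mathcomp Require Import all_classical all_reals all_analysis.
From mathcomp Require Import lra.
Set Implicit Arguments. Unset Strict Implicit. Unset Printing Implicit Defensive.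
Import Order.TTheory GRing.Theory Num.Theory.
Import numFieldNormedType.Exports.
Local Open Scope classical_set_scope.
Local Open Scope ring_scope.

(* In a reflexive space every element of the bidual is the evaluation at some
   x, and by Hahn-Banach the evaluation at x has norm |x|.  So the supporting
   hyperplanes of the dual ball are the sets {f | f x = 1} with |x| = 1, whose
   trace on the dual sphere is exactly J(x); hence [S_dual X] is the supremum of
   diam J(x) over the unit sphere, which is at most eps iff X is eps-smooth.
   Hahn-Banach itself follows from Zorn's lemma on the subspaces of X * R lying
   below the norm: a maximal one is the graph of a functional, since a subspace
   missing the line above some y can be extended by one dimension. *)

Section HahnBanach.
Variables (R : realType) (X : normedModType R).

Definition subnorm_subspace (G : set (X * R)) : Prop :=
  [/\ G (0, 0),
      forall (a : R) p q, G p -> G q -> G (a *: p.1 + q.1, a * p.2 + q.2)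
    & forall p, G p -> p.2 <= `|p.1|].

Lemma subnorm_subspace_comb G a u s v t y r : subnorm_subspace G ->
  G (u, s) -> G (v, t) -> a *: u + v = y -> a * s + t = r -> G (y, r).
Proof. by move=> [_ HG _] Gus Gvt <- <-; exact: (HG a (u, s) (v, t)). Qed.

Lemma subnorm_subspace_single_valued G u s t : subnorm_subspace G ->
  G (u, s) -> G (u, t) -> s = t.
Proof.
move=> HG Gs Gt; have [_ _ Gle] := HG.
have /Gle/= : G (0, s - t).
  apply: (subnorm_subspace_comb (a := -1) HG Gt Gs); first by rewrite scaleN1r addNr.
  by rewrite mulN1r addrC.
have /Gle/= : G (0, t - s).
  apply: (subnorm_subspace_comb (a := -1) HG Gs Gt); first by rewrite scaleN1r addNr.
  by rewrite mulN1r addrC.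
rewrite normr0; lra.
Qed.

(* [Zorn_bigcup] also admits the empty chain, whose union is empty: this is why
   the chain is joined with [G]. *)
Lemma subnorm_subspace_chain G (F : set (set (X * R))) : subnorm_subspace G ->
  F `<=` (fun B => subnorm_subspace (B `|` G)) -> total_on F subset ->
  subnorm_subspace ((\bigcup_(B in F) B) `|` G).
Proof.
move=> HG FP Ftot; set U := \bigcup_(B in F) B.
have subU B : F B -> B `|` G `<=` U `|` G.
  by move=> FB p [Bp|Gp]; [left; exists B|right].
have common p q : (U `|` G) p -> (U `|` G) q ->
    exists2 H, subnorm_subspace H & [/\ H p, H q & H `<=` U `|` G].
  move=> [[B FB Bp]|Gp] [[C FC Cq]|Gq].
  - have [BC|CB] := Ftot B C FB FC.
      by exists (C `|` G); [exact: FP | split; [left; exact: BC|left|exact: subU]].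
    by exists (B `|` G); [exact: FP | split; [left|left; exact: CB|exact: subU]].
  - by exists (B `|` G); [exact: FP | split; [left|right|exact: subU]].
  - by exists (C `|` G); [exact: FP | split; [right|left|exact: subU]].
  - by exists G => //; split => // r Gr; right.
split; first by right; case: HG.
- move=> a p q Up Uq; have [H [_ HH _] [Hp Hq HU]] := common p q Up Uq.
  exact/HU/HH.
- move=> p Up; have [H [_ _ HH] [Hp _ _]] := common p p Up Up; exact: HH.
Qed.

Definition extend (A : set (X * R)) (y : X) (r : R) : set (X * R) :=
  [set q | exists p c, A p /\ q = (p.1 + c *: y, p.2 + c * r)].

(* Any value between sup (t - |v - y|) and inf (|w + y| - t') over A works. *)
Definition extension_value (A : set (X * R)) (y : X) : R :=
  sup [set p.2 - `|p.1 - y| | p in A].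

Lemma extension_value_bounds A y u s : subnorm_subspace A -> A (u, s) ->
  s - `|u - y| <= extension_value A y <= `|u + y| - s.
Proof.
move=> HA Aus.
have gap v t w t' : A (v, t) -> A (w, t') -> t - `|v - y| <= `|w + y| - t'.
  move=> Avt Awt'; have [_ _ Ale] := HA.
  have /= := Ale _ (subnorm_subspace_comb (a := 1) HA Avt Awt' erefl erefl).
  have -> : 1 *: v + w = (v - y) + (w + y) by rewrite scale1r addrACA addNr addr0.
  have := ler_normD (v - y) (w + y); lra.
have ub : ubound [set p.2 - `|p.1 - y| | p in A] (`|u + y| - s).
  by move=> _ [[v t] Avt <-]; exact: gap.
apply/andP; split; last by apply: ge_sup => //; exists (s - `|u - y|), (u, s).
by apply: ub_le_sup; [exists (`|u + y| - s) | exists (u, s)].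
Qed.

Lemma subnorm_subspace_extend A y : subnorm_subspace A ->
  subnorm_subspace (extend A y (extension_value A y)).
Proof.
move=> HA; set r := extension_value A y; have [A00 Acomb Ale] := HA.
split.
- by exists (0, 0), 0; rewrite scale0r mul0r !addr0.
- move=> a _ _ [p [c [Ap ->]]] [q [d [Aq ->]]] /=.
  exists (a *: p.1 + q.1, a * p.2 + q.2), (a * c + d); split; first exact: Acomb.
  congr pair => /=; first by rewrite scalerDr scalerA scalerDl addrACA.
  by rewrite mulrDr mulrDl mulrA addrACA.
- move=> _ [[u s] [c [Aus ->]]] /=.
  have Ascaled b : A (b *: u, b * s).
    exact: subnorm_subspace_comb HA Aus A00 (addr0 _) (addr0 _).
  have [c0|c0|->] := ltgtP c 0; last by rewrite mul0r scale0r !addr0; exact: Ale Aus.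
  + pose d := - c; have d0 : 0 < d by rewrite oppr_gt0.
    have /andP[+ _] := extension_value_bounds y HA (Ascaled d^-1).
    have -> : u + c *: y = d *: (d^-1 *: u - y).
      by rewrite scalerBr scalerA mulfV ?gt_eqF // scale1r scaleNr opprK.
    rewrite normrZ gtr0_norm // -/r => hr.
    have := ler_wpM2l (ltW d0) hr; rewrite mulrBr mulrA mulfV ?gt_eqF // mul1r.
    rewrite /d; lra.
  + have /andP[_] := extension_value_bounds y HA (Ascaled c^-1).
    have -> : u + c *: y = c *: (c^-1 *: u + y).
      by rewrite scalerDr scalerA mulfV ?gt_eqF // scale1r.
    rewrite normrZ gtr0_norm // -/r => hr.
    have := ler_wpM2l (ltW c0) hr; rewrite mulrBr mulrA mulfV ?gt_eqF // mul1r.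
    lra.
Qed.

Lemma subnorm_subspace_maximal_total A : subnorm_subspace A ->
  (forall B, A `<` B -> ~ subnorm_subspace B) -> forall y, exists s, A (y, s).
Proof.
move=> HA Amax y; apply: contrapT => nAy.
apply: (Amax _ _ (subnorm_subspace_extend y HA)); split.
  by move=> [u s] Aus; exists (u, s), 0; rewrite scale0r mul0r !addr0.
move=> /(_ (y, extension_value A y)) BA; apply: nAy.
exists (extension_value A y); apply: BA.
by exists (0, 0), 1; split; [case: HA | rewrite scale1r mul1r !add0r].
Qed.

Lemma subnorm_graph_functional A : subnorm_subspace A ->
  (forall y, exists s, A (y, s)) ->
  exists f : X -> R, [/\ forall a x y, f (a *: x + y) = a * f x + f y,
    forall x, `|f x| <= `|x| & forall p, A p -> f p.1 = p.2].
Proof.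
move=> HA Atot; have [A00 _ Ale] := HA.
pose f y := projT1 (cid (Atot y)).
have Af y : A (y, f y) := projT2 (cid (Atot y)).
exists f; split.
- move=> a y1 y2; apply: (subnorm_subspace_single_valued HA (Af _)).
  exact: subnorm_subspace_comb HA (Af y1) (Af y2) erefl erefl.
- move=> y; have /Ale/= le_fy := Af y.
  have /Ale/= : A (- y, - f y).
    apply: (subnorm_subspace_comb (a := -1) HA (Af y) A00).
      by rewrite scaleN1r addr0.
    by rewrite mulN1r addr0.
  by rewrite normrN ler_norml => ?; apply/andP; split; lra.
- by move=> [u s] Aus; exact: subnorm_subspace_single_valued HA (Af u) Aus.
Qed.

Theorem hahn_banach G : subnorm_subspace G ->
  exists f : X -> R, [/\ forall a x y, f (a *: x + y) = a * f x + f y,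
    forall x, `|f x| <= `|x| & forall p, G p -> f p.1 = p.2].
Proof.
move=> HG.
have [A [HAG Amax]] : exists A, subnorm_subspace (A `|` G) /\
    forall B, A `<` B -> ~ subnorm_subspace (B `|` G).
  by apply: Zorn_bigcup => F FP Ftot; exact: subnorm_subspace_chain.
have GA : G `<=` A.
  apply: contrapT => nGA; apply: (Amax (A `|` G)); last by rewrite -setUA setUid.
  by split=> [p Ap|AGA]; [left | apply: nGA => p Gp; apply: AGA; right].
rewrite setUidl // in HAG.
have Atot : forall y, exists s, A (y, s).
  apply: subnorm_subspace_maximal_total HAG _ => B AB HB; apply: (Amax B AB).
  by rewrite setUidl //; apply: subset_trans GA AB.1.
have [f [flin fle fA]] := subnorm_graph_functional HAG Atot.
by exists f; split => // p /GA; exact: fA.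
Qed.

Corollary norming_functional (x : X) :
  exists f : X -> R, [/\ forall a x y, f (a *: x + y) = a * f x + f y,
    forall y, `|f y| <= `|y| & f x = `|x|].
Proof.
pose G : set (X * R) := [set p | exists c : R, p = (c *: x, c * `|x|)].
have HG : subnorm_subspace G.
  split.
  - by exists 0; rewrite scale0r mul0r.
  - move=> a _ _ [c ->] [d ->]; exists (a * c + d) => /=.
    by rewrite scalerDl scalerA mulrDl mulrA.
  - by move=> _ [c ->] /=; rewrite normrZ ler_wpM2r // ler_norm.
have [f [flin fle fG]] := hahn_banach HG.
exists f; split => //; have := fG (x, `|x|); rewrite /= => -> //.
by exists 1; rewrite scale1r mul1r.
Qed.

End HahnBanach.

Section Bidual.
Variables (R : realType) (X : normedModType R).

Lemma dual0 (f : X -> R) : is_dual f -> f 0 = 0.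
Proof.
by move=> [flin _]; have := flin 1 0 0; rewrite scale1r addr0 mul1r => h; lra.
Qed.

Lemma dualZ (f : X -> R) a x : is_dual f -> f (a *: x) = a * f x.
Proof. by move=> fd; have := fd.1 a x 0; rewrite !addr0 dual0 // addr0. Qed.

Lemma dnorm_has_ubound (f : X -> R) : is_dual f ->
  has_ubound [set `|f x| | x in [set x : X | `|x| <= 1]].
Proof.
move=> [_ [C fC]]; exists `|C| => _ [z zle <-].
apply: le_trans (fC z) _; apply: le_trans (ler_wpM2r (normr_ge0 z) (ler_norm C)) _.
exact: ler_piMr.
Qed.

Lemma dnorm_le (f : X -> R) z : is_dual f -> `|f z| <= dnorm f * `|z|.
Proof.
move=> fd; have [->|z0] := eqVneq z 0; first by rewrite dual0 // !normr0 mulr0.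
have hz : 0 < `|z| by rewrite normr_gt0.
have := ub_le_sup (dnorm_has_ubound fd) (ex_intro2 _ _ (`|z|^-1 *: z) _ erefl).
rewrite dualZ // normrM normfV normr_id mulrC ler_pdivrMr //; apply.
by rewrite /= normrZ normfV normr_id mulVf ?gt_eqF.
Qed.

Lemma dual_unit_ball_le (f : X -> R) z : is_dual f -> dnorm f <= 1 ->
  `|f z| <= `|z|.
Proof.
move=> fd f1; apply: le_trans (dnorm_le z fd) _.
by rewrite -[leRHS]mul1r ler_wpM2r.
Qed.

Lemma norming_dual_unit_ball (x : X) :
  exists f : X -> R, [/\ is_dual f, dnorm f <= 1 & f x = `|x|].
Proof.
have [f [flin fle fx]] := norming_functional x.
exists f; split => //; first by split => //; exists 1 => y; rewrite mul1r.
apply: ge_sup; first by exists `|f 0|, 0 => //=; rewrite normr0.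
by move=> _ [z zle <-]; apply: le_trans (fle z) zle.
Qed.

Lemma is_bidual_eval (x : X) : is_bidual (fun f => f x).
Proof. by split => //; exists `|x| => f fd; rewrite mulrC; exact: dnorm_le. Qed.

Lemma bdnorm_eval (x : X) : bdnorm (fun f => f x) = `|x|.
Proof.
have [h [hd h1 hx]] := norming_dual_unit_ball x.
have ub : ubound [set `|f x| | f in [set f | is_dual f /\ dnorm f <= 1]] `|x|.
  by move=> _ [f [fd f1] <-]; exact: dual_unit_ball_le.
have hmem : [set `|f x| | f in [set f | is_dual f /\ dnorm f <= 1]] `|x|.
  by exists h; rewrite ?hx ?normr_id.
apply/le_anti/andP; split; first by apply: ge_sup ub; exists `|x|.
by apply: ub_le_sup hmem; exists `|x|.
Qed.

Lemma bidual_sphere_eval (x : X) :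
  bidual_sphere (fun f => f x) <-> `|x| = 1.
Proof.
rewrite /bidual_sphere bdnorm_eval.
by split=> [[]|x1] //; split => //; exact: is_bidual_eval.
Qed.

Lemma bdnorm_ext (Phi Psi : (X -> R) -> R) :
  (forall f, is_dual f -> Phi f = Psi f) -> bdnorm Phi = bdnorm Psi.
Proof.
move=> PhiPsi; rewrite /bdnorm; congr sup; apply/seteqP.
by split=> _ [f [fd f1] <-]; exists f => //; rewrite PhiPsi.
Qed.

Lemma face_ext (Phi Psi : (X -> R) -> R) :
  (forall f, is_dual f -> Phi f = Psi f) -> face Phi = face Psi.
Proof.
move=> PhiPsi; apply/seteqP.
by split=> f [[fd f1] Pf]; split => //; rewrite -Pf PhiPsi.
Qed.

Lemma face_eval (x : X) : `|x| = 1 -> face (fun f => f x) = Jset x.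
Proof. by rewrite /face /Jset => ->. Qed.

Lemma S_dual_reflexive : reflexive_space X ->
  S_dual X = ereal_sup [set ddiam (Jset x) | x in [set x : X | `|x| = 1]].
Proof.
move=> refl; congr ereal_sup; apply/seteqP; split.
- move=> _ [Phi [PhiB Phi1] <-]; have [x Phix] := refl Phi PhiB.
  have x1 : `|x| = 1 by rewrite -bdnorm_eval -(bdnorm_ext Phix).
  by exists x => //; rewrite -face_eval // (face_ext Phix).
- move=> _ [x x1 <-]; exists (fun f => f x); first exact/bidual_sphere_eval.
  by rewrite face_eval.
Qed.

End Bidual.

Theorem theorem2p5 (R : realType) (X : completeNormedModType R) (eps : R) :
  0 <= eps < 2 -> reflexive_space X ->
  (eps_smooth X eps <-> (S_dual X <= eps%:E)%E).
Proof.
move=> _ refl; rewrite S_dual_reflexive //; split.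
- by move=> smooth; apply: ge_ereal_sup => _ [x x1 <-]; exact: smooth.
- by move=> HS x x1; apply: le_trans HS; apply: ereal_sup_ubound; exists x.
Qed.
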